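(* Let $\mathbb{X}$ be a reflexive Kadets-Klee real Banach space and $\mathbb{Y}$ any real Banach space (both of dimension greater than $1$). Let $T\in\mathbb{K}(\mathbb{X},\mathbb{Y})$ with $\|T\|=1$ and let $\epsilon>0$. Then $T$ is a uniform $\epsilon$-BPB approximation of itself. In particular, if $\mathbb{X}$ and $\mathbb{Y}$ are finite-dimensional, then every $T\in\mathbb{L}(\mathbb{X},\mathbb{Y})$ with $\|T\|=1$ has a uniform $\epsilon$-BPB approximation for every $\epsilon>0$.
   Context: $\mathbb{K}(\mathbb{X},\mathbb{Y})$ (resp. $\mathbb{L}(\mathbb{X},\mathbb{Y})$) denotes the compact (resp. bounded) linear operators with the operator norm; $S_{\mathbb{X}}$ is the unit sphere. $\mathbb{X}$ is Kadets-Klee if $x_n\to x$ weakly and $\|x_n\|\to\|x\|$ imply $\|x_n-x\|\to0$. For $T\in\mathbb{L}(\mathbb{X},\mathbb{Y})$ with $\|T\|=1$ and fixed $\epsilon>0$, an operator $A\in\mathbb{L}(\mathbb{X},\mathbb{Y})$ with $\|A\|=1$ is a uniform $\epsilon$-BPB approximation of $T$ if there exists $\delta(\epsilon)>0$ such that whenever $x_0\in S_{\mathbb{X}}$ satisfies $\|Tx_0\|>1-\delta(\epsilon)$, there exists $u_0\in S_{\mathbb{X}}$ with $\|Au_0\|=1$, $\|u_0-x_0\|<\epsilon$ and $\|A-T\|<\epsilon$. *)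

From HB Require Import structures.
From mathcomp Require Import all_boot all_order all_algebra.
From mathcomp Require Import all_classical all_reals all_analysis.
Set Implicit Arguments. Unset Strict Implicit. Unset Printing Implicit Defensive.
Import Order.TTheory GRing.Theory Num.Theory.
Import numFieldNormedType.Exports.
Local Open Scope classical_set_scope.
Local Open Scope ring_scope.

Section Defs.
Variable R : realType.

Definition bounded_op (X Y : normedModType R) (T : X -> Y) : Prop :=
  (forall x y, T (x + y) = T x + T y) /\
  (forall (a : R) x, T (a *: x) = a *: T x) /\
  continuous T.

Definition opnorm (X Y : normedModType R) (T : X -> Y) : R :=
  sup [set `|T x| | x in [set x : X | `|x| <= 1]].

Definition dual (X : normedModType R) : set (X -> R) :=
  [set f | bounded_op (f : X -> R^o)].

Definition weak_cvg (X : normedModType R) (u : nat -> X) (x : X) : Prop :=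
  forall f, dual f -> (fun n => f (u n)) @ \oo --> f x.

Definition kadets_klee (X : normedModType R) : Prop :=
  forall (u : nat -> X) (x : X), weak_cvg u x ->
    (fun n => `|u n|) @ \oo --> `|x| ->
    (fun n => `|u n - x|) @ \oo --> (0 : R).

(* reflexive: the canonical embedding X -> X^** is onto, i.e. every bounded
   linear functional Phi on the dual X^* (with its operator norm) is an
   evaluation functional f |-> f x. *)
Definition reflexive_space (X : normedModType R) : Prop :=
  forall Phi : (X -> R) -> R,
    (forall f g (a : R), dual f -> dual g ->
        Phi (fun x => a * f x + g x) = a * Phi f + Phi g) ->
    (exists C : R, forall f, dual f -> `|Phi f| <= C * opnorm (f : X -> R^o)) ->
    exists x : X, forall f, dual f -> Phi f = f x.

Definition dim_gt1 (X : normedModType R) : Prop :=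
  exists x y : X, forall a b : R, a *: x + b *: y = 0 -> a = 0 /\ b = 0.

Definition finite_dim (X : normedModType R) : Prop :=
  exists (n : nat) (v : 'I_n -> X),
    forall x : X, exists c : 'I_n -> R, x = \sum_(i < n) c i *: v i.

Definition compact_op (X Y : normedModType R) (T : X -> Y) : Prop :=
  bounded_op T /\ compact (closure (T @` [set x : X | `|x| <= 1])).

Definition uniform_BPB_approx (X Y : normedModType R) (T A : X -> Y) (eps : R)
  : Prop :=
  bounded_op A /\ opnorm A = 1 /\
  exists delta : R, 0 < delta /\
    forall x0 : X, `|x0| = 1 -> `|T x0| > 1 - delta ->
      exists u0 : X, `|u0| = 1 /\ `|A u0| = 1 /\ `|u0 - x0| < eps /\
        opnorm (fun x => A x - T x) < eps.

End Defs.

From HB Require Import structures.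
From mathcomp Require Import all_boot all_order all_algebra.
From mathcomp Require Import all_classical all_reals all_analysis.
From mathcomp Require Import ring lra.
Import Order.TTheory GRing.Theory Num.Theory.
Import numFieldNormedType.Exports.
Local Open Scope classical_set_scope.
Local Open Scope ring_scope.
Set Implicit Arguments. Unset Strict Implicit. Unset Printing Implicit Defensive.

(* Both statements reduce to a sequential form: if [|x_n| = 1] and [|T x_n| -> 1],
   some [x_n] is [eps]-close to a unit vector where [T] attains its norm.
   Fix an ultrafilter [U] finer than the cofinite filter.  In finite dimension
   [x_n] has a norm [U]-limit [x]; in the reflexive case it has a weak [U]-limit
   [x], and compactness makes [T x_n] converge in norm along [U], necessarily to
   [T x].  Either way [|T x| = 1 = |x|].  To use the Kadets-Klee property one needs
   a weakly convergent sequence: diagonalising against norming functionals of a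
   countable dense subset of the span of the [x_n] gives a subsequence converging
   weakly, hence in norm, to [x].  Hahn-Banach, proved here from Zorn's lemma,
   provides the norming functionals and keeps weak limits inside the closed span. *)

Section BoundedOperator.
Context {R : realType} {X Y : normedModType R} (T : X -> Y).
Hypothesis hT : bounded_op T.

Lemma bounded_opD x y : T (x + y) = T x + T y. Proof. by case: hT. Qed.
Lemma bounded_opZ a x : T (a *: x) = a *: T x. Proof. by case: hT => _ []. Qed.
Lemma bounded_op_continuous x : {for x, continuous T}.
Proof. by case: hT => _ [_]; apply. Qed.

Lemma bounded_op0 : T 0 = 0.
Proof. by rewrite -(scale0r 0) bounded_opZ scale0r. Qed.

Lemma bounded_opN x : T (- x) = - T x.
Proof. by rewrite -scaleN1r bounded_opZ scaleN1r. Qed.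

Lemma bounded_opB x y : T (x - y) = T x - T y.
Proof. by rewrite bounded_opD bounded_opN. Qed.

Lemma bounded_op_bounded : exists2 M, 0 < M & forall x, `|T x| <= M * `|x|.
Proof.
have : T x @[x --> (0 : X)] --> (0 : Y).
  by rewrite -bounded_op0; exact: bounded_op_continuous.
move=> /cvgrPdist_lt /(_ 1 ltr01); rewrite nearE => /nbhs_ballP [r /= r0 Hr].
exists (2 / r) => [|x]; first by rewrite divr_gt0.
have [->|x0] := eqVneq x 0; first by rewrite bounded_op0 !normr0 mulr0.
have nx : 0 < `|x| by rewrite normr_gt0.
pose k := r / 2 / `|x|.
have k0 : 0 < k by rewrite /k !divr_gt0.
have : ball (0 : X) r (k *: x).
  rewrite -ball_normE /= sub0r normrN normrZ gtr0_norm // /k divfK ?gt_eqF //.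
  by rewrite ltr_pdivrMr // ltr_pMr // ltr1n.
move/Hr; rewrite sub0r normrN bounded_opZ normrZ gtr0_norm // => Tkx.
have -> : 2 / r * `|x| = k^-1 by rewrite /k; field; rewrite ?gt_eqF.
by rewrite -(ler_pM2l k0) mulfV ?gt_eqF // ltW.
Qed.

Lemma opnorm_has_sup : has_sup [set `|T x| | x in [set x : X | `|x| <= 1]].
Proof.
have [M M0 TM] := bounded_op_bounded.
split; first by exists `|T 0|, 0 => //=; rewrite normr0.
exists M => _ [x /= x1 <-]; apply: le_trans (TM x) _.
by rewrite ler_piMr // ltW.
Qed.

Lemma ler_opnorm x : `|x| <= 1 -> `|T x| <= opnorm T.
Proof. by move=> x1; apply: sup_upper_bound opnorm_has_sup _ _; exists x. Qed.

Lemma opnorm_ge0 : 0 <= opnorm T.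
Proof. by apply: le_trans (ler_opnorm (x := 0) _); rewrite ?normr0. Qed.

Lemma ler_opnormM x : `|T x| <= opnorm T * `|x|.
Proof.
have [->|x0] := eqVneq x 0; first by rewrite bounded_op0 !normr0 mulr0.
have nx : 0 < `|x| by rewrite normr_gt0.
have -> : x = `|x| *: (`|x|^-1 *: x) by rewrite scalerA mulfV ?gt_eqF ?scale1r.
rewrite bounded_opZ !normrZ gtr0_norm // mulrCA ler_pM2l //.
rewrite normfV normr_id mulVf ?gt_eqF // mulr1.
by apply: ler_opnorm; rewrite normrZ normfV normr_id mulVf ?gt_eqF.
Qed.

End BoundedOperator.

Section HahnBanach.
Context {R : realType} {V : lmodType R} (p : V -> R).
Hypothesis pD : forall u v, p (u + v) <= p u + p v.
Hypothesis pZ : forall (t : R) v, 0 <= t -> p (t *: v) = t * p v.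

Let p0 : p 0 = 0.
Proof. by rewrite -(scale0r 0) pZ ?mul0r. Qed.

Lemma sublinear_geM t v : t * p v <= p (t *: v).
Proof.
have [t0|t0] := leP 0 t; first by rewrite pZ.
have nt : 0 <= - t by rewrite oppr_ge0 ltW.
have pN : 0 <= p v + p (- v) by rewrite -p0 -(subrr v) pD.
have -> : t *: v = (- t) *: (- v) by rewrite scaleNr scalerN opprK.
by rewrite pZ //; have := mulr_ge0 nt pN; rewrite mulrDr !mulNr; lra.
Qed.

(* Linear functionals dominated by [p] on a subspace, encoded by their graphs. *)
Definition dominated_graph (G : set (V * R)) :=
  [/\ (forall x a b, G (x, a) -> G (x, b) -> a = b),
      (forall x y a b, G (x, a) -> G (y, b) -> G (x + y, a + b)),
      (forall t x a, G (x, a) -> G (t *: x, t * a)) &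
      (forall x a, G (x, a) -> a <= p x)].

Definition graph_extension (G : set (V * R)) (y : V) (c : R) : set (V * R) :=
  [set xa | exists x a t, G (x, a) /\ xa = (x + t *: y, a + t * c)].

Section OneStepExtension.
Variables (G : set (V * R)) (y : V).
Hypotheses (hG : dominated_graph G) (Gy : forall c, ~ G (y, c)).

(* Sublinearity puts every [a - p (x - y)] below every [p (x' + y) - a'];
   any [c] in between will do. *)
Lemma dominated_extension_value :
  exists c, forall x a, G (x, a) -> a + c <= p (x + y) /\ a - c <= p (x - y).
Proof.
have [_ GD GZ Gp] := hG.
have [G00|nG00] := pselect (G (0, 0)); last first.
  exists 0 => x a Gxa; exfalso; apply: nG00.
  by have := GZ 0 _ _ Gxa; rewrite scale0r mul0r.
pose L := [set r | exists x a, G (x, a) /\ r = a - p (x - y)].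
have Lub x' a' : G (x', a') -> ubound L (p (x' + y) - a').
  move=> Gxa' _ [x [a [Gxa ->]]].
  have := Gp _ _ (GD _ _ _ _ Gxa Gxa').
  have := pD (x - y) (x' + y).
  by rewrite addrACA addNr addr0; lra.
have Lsup : has_sup L.
  by split; [exists (0 - p (0 - y)), 0, 0 | exists (p (0 + y) - 0); apply: Lub].
exists (sup L) => x a Gxa; split.
  by have := ge_sup (Lsup.1) (Lub _ _ Gxa); lra.
suff : a - p (x - y) <= sup L by lra.
by apply: sup_upper_bound => //; exists x, a.
Qed.

Lemma graph_extension_dominated c :
  (forall x a, G (x, a) -> a + c <= p (x + y) /\ a - c <= p (x - y)) ->
  dominated_graph (graph_extension G y c).
Proof.
move=> hc; have [Gf GD GZ Gp] := hG; split.
- move=> _ _ _ [x [a [t [Gxa [-> ->]]]]] [x' [a' [t' [Gxa' [e ->]]]]].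
  have [tt'|tt'] := eqVneq t t'.
    move: e; rewrite -tt' => /addIr exx.
    by rewrite exx in Gxa; rewrite (Gf _ _ _ Gxa Gxa').
  suff : G (y, (t' - t)^-1 * (a - a')) by move/Gy.
  have ey : y = (t' - t)^-1 *: (x - x').
    rewrite -[x](addrK (t *: y)) e addrAC [_ - x']addrAC subrr add0r -scalerBl.
    by rewrite scalerA mulVf ?scale1r // subr_eq0 eq_sym.
  rewrite ey; apply: (GZ); apply: (GD _ _ _ _ Gxa).
  by have := GZ (-1) _ _ Gxa'; rewrite scaleN1r mulN1r.
- move=> _ _ _ _ [x [a [t [Gxa [-> ->]]]]] [x' [a' [t' [Gxa' [-> ->]]]]].
  exists (x + x'), (a + a'), (t + t'); split; first exact: GD.
  by rewrite scalerDl mulrDl; congr (_, _); rewrite addrACA.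
- move=> s _ _ [x [a [t [Gxa [-> ->]]]]].
  exists (s *: x), (s * a), (s * t); split; first exact: GZ.
  by rewrite scalerDr scalerA mulrDr mulrA.
- move=> _ _ [x [a [t [Gxa [-> ->]]]]].
  have [t0|t0|->] := ltgtP t 0; last by rewrite scale0r mul0r !addr0; exact: Gp.
  + have s0 : 0 < - t by rewrite oppr_gt0.
    have [_] := hc _ _ (GZ (- t)^-1 _ _ Gxa).
    have -> : x + t *: y = (- t) *: ((- t)^-1 *: x - y).
      by rewrite scalerBr scalerA mulfV ?gt_eqF // scale1r scaleNr opprK.
    have -> : a + t * c = (- t) * ((- t)^-1 * a - c).
      by rewrite mulrBr mulrA mulfV ?gt_eqF // mul1r mulNr opprK.
    by rewrite pZ ?(ltW s0) // ler_pM2l.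
  + have [+ _] := hc _ _ (GZ t^-1 _ _ Gxa).
    have -> : x + t *: y = t *: (t^-1 *: x + y).
      by rewrite scalerDr scalerA mulfV ?gt_eqF // scale1r.
    have -> : a + t * c = t * (t^-1 * a + c).
      by rewrite mulrDr mulrA mulfV ?gt_eqF // mul1r.
    by rewrite pZ ?(ltW t0) // ler_pM2l.
Qed.

Lemma sub_graph_extension c : G `<=` graph_extension G y c.
Proof. by move=> [x a] Gxa; exists x, a, 0; rewrite scale0r mul0r !addr0. Qed.

Lemma graph_extension_new c : G (0, 0) -> graph_extension G y c (y, c).
Proof. by exists 0, 0, 1; rewrite scale1r mul1r !add0r. Qed.

End OneStepExtension.

Lemma dominated_graph_bigcup (F : set (set (V * R))) :
  F `<=` dominated_graph -> total_on F subset ->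
  dominated_graph (\bigcup_(G in F) G).
Proof.
move=> Fdom Ftot.
have common G1 G2 u v : F G1 -> F G2 -> G1 u -> G2 v ->
    exists2 G, F G & G u /\ G v.
  move=> F1 F2 G1u G2v; have [S|S] := Ftot _ _ F1 F2.
    by exists G2 => //; split => //; apply: S.
  by exists G1 => //; split => //; apply: S.
split.
- move=> x a b [G1 F1 G1x] [G2 F2 G2x].
  have [G FG [Ga Gb]] := common _ _ _ _ F1 F2 G1x G2x.
  by have [Gf _ _ _] := Fdom G FG; exact: Gf Ga Gb.
- move=> x y a b [G1 F1 G1x] [G2 F2 G2y].
  have [G FG [Gx Gy]] := common _ _ _ _ F1 F2 G1x G2y.
  by exists G => //; have [_ GD _ _] := Fdom G FG; exact: GD Gx Gy.
- move=> t x a [G FG Gx]; exists G => //.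
  by have [_ _ GZ _] := Fdom G FG; exact: GZ.
- by move=> x a [G FG Gx]; have [_ _ _ Gp] := Fdom G FG; exact: Gp Gx.
Qed.

Lemma dominated_line z :
  dominated_graph [set xa | exists t, xa = (t *: z, t * p z)].
Proof.
split.
- move=> x a b [t [-> ->]] [t' [e ->]].
  have [->|z0] := eqVneq z 0; first by rewrite p0 !mulr0.
  move/eqP: e; rewrite -subr_eq0 -scalerBl scaler_eq0 (negbTE z0) orbF subr_eq0.
  by move/eqP ->.
- move=> x y a b [t [-> ->]] [t' [-> ->]]; exists (t + t').
  by rewrite scalerDl mulrDl.
- by move=> s x a [t [-> ->]]; exists (s * t); rewrite scalerA mulrA.
- by move=> x a [t [-> ->]]; exact: sublinear_geM.
Qed.

Theorem hahn_banach z : exists f : V -> R,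
  [/\ forall x y, f (x + y) = f x + f y, forall a x, f (a *: x) = a * f x,
      forall x, f x <= p x & f z = p z].
Proof.
(* The seed condition must hold vacuously for the empty union of the empty chain. *)
pose P G := dominated_graph G /\ (G !=set0 -> G (z, p z)).
have chainP F : F `<=` P -> total_on F subset -> P (\bigcup_(G in F) G).
  move=> FP Ftot; split; first by apply: dominated_graph_bigcup => // G /FP [].
  by move=> [[x a] [G FG Gxa]]; exists G => //; apply: (FP G FG).2; exists (x, a).
have [A [[hA Az] Amax]] := Zorn_bigcup chainP.
have [Af AD AZ Ap] := hA.
have Azp : A (z, p z).
  apply: Az; apply: contrapT => A0.
  apply: (Amax _ _ (conj (dominated_line z) _)); last by exists 1; rewrite scale1r mul1r.
  split; first by move=> u Au; exfalso; apply: A0; exists u.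
  by move=> S; apply: A0; exists (z, p z); apply: S; exists 1; rewrite scale1r mul1r.
have A00 : A (0, 0) by have := AZ 0 _ _ Azp; rewrite scale0r mul0r.
have Atotal y : exists c, A (y, c).
  apply: contrapT => nAy.
  have Ay c : ~ A (y, c) by move=> Ayc; apply: nAy; exists c.
  have [c hc] := dominated_extension_value y hA.
  apply: (Amax (graph_extension A y c)).
    split; first exact: sub_graph_extension.
    by move=> S; apply: (Ay c); apply: S; exact: graph_extension_new.
  split; first exact: graph_extension_dominated.
  by move=> _; apply: sub_graph_extension.
have [f Afx] := choice Atotal.
exists f; split.
- by move=> x y; apply: (Af _ _ _ (Afx (x + y))); apply: AD.
- by move=> a x; apply: (Af _ _ _ (Afx (a *: x))); apply: AZ.
- by move=> x; apply: Ap.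
- exact: (Af _ _ _ (Afx z)).
Qed.

End HahnBanach.

Section Duals.
Context {R : realType} {X : normedModType R}.

Lemma dominated_norm_le (f : X -> R) (C : R) :
  (forall a x, f (a *: x) = a * f x) ->
  (forall x, f x <= C * `|x|) -> forall x, `|f x| <= C * `|x|.
Proof.
move=> fZ fC x; rewrite ler_norml fC andbT.
by have := fC ((-1) *: x); rewrite fZ normrZ normrN1 mul1r; lra.
Qed.

Lemma dual_of_dominated (f : X -> R) (C : R) : 0 < C ->
  (forall x y, f (x + y) = f x + f y) -> (forall a x, f (a *: x) = a * f x) ->
  (forall x, f x <= C * `|x|) -> dual f.
Proof.
move=> C0 fD fZ fC; split; first exact: fD.
split; first exact: fZ.
move=> x; apply/cvgrPdist_lt => e e0; apply/nbhs_ballP.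
exists (e / C) => [|t]; first by rewrite /= divr_gt0.
rewrite -ball_normE /= => xt.
have -> : f x - f t = f (x - t) by rewrite fD -[- t]scaleN1r fZ mulN1r.
apply: le_lt_trans (dominated_norm_le fZ fC _) _.
by rewrite mulrC -ltr_pdivlMr.
Qed.

Lemma norming_functional (z : X) :
  exists f : X -> R, [/\ dual f, f z = `|z| & forall x, `|f x| <= `|x|].
Proof.
have [|f [fD fZ fle fz]] := hahn_banach (@ler_normD _ _) _ z.
  by move=> t a t0; rewrite normrZ ger0_norm.
have fle1 x : f x <= 1 * `|x| by rewrite mul1r.
exists f; split => // [|x]; first exact: dual_of_dominated ltr01 fD fZ fle1.
by rewrite -[`|x|]mul1r; exact: dominated_norm_le fZ fle1 x.
Qed.

Lemma dual_comp {Y : normedModType R} (T : X -> Y) (g : Y -> R) :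
  bounded_op T -> dual g -> dual (fun x => g (T x)).
Proof.
move=> hT dg; split; first by move=> x y; rewrite (bounded_opD hT) (bounded_opD dg).
split; first by move=> a x; rewrite (bounded_opZ hT) (bounded_opZ dg).
move=> x; apply: (@continuous_comp _ _ _ T (g : Y -> R^o)).
  exact: (bounded_op_continuous hT).
exact: (bounded_op_continuous dg).
Qed.

End Duals.

Section FilterLimits.
Context {R : realType}.

Lemma exists_ultra_cofinite (J : set nat) :
  (forall N, exists2 j, (N <= j)%N & J j) ->
  exists U : set_system nat, [/\ UltraFilter U, \oo `<=` U & U J].
Proof.
move=> Jinf.
pose F := filter_from setT (fun N => J `&` [set n | (N <= n)%N]).
have FF : ProperFilter F.
  apply: filter_from_proper => [|N _]; last by have [j Nj Jj] := Jinf N; exists j.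
  apply: filter_from_filter; first by exists 0%N.
  move=> i j _ _; exists (maxn i j) => // n [Jn /=]; rewrite geq_max => /andP[].
  by move=> *; split; split.
have [U [UU FU]] := ultraFilterLemma FF.
exists U; split => //.
  by move=> A [N _ NA]; apply: FU; exists N => // n [_ Nn]; exact: NA.
by apply: FU; exists 0%N => // n [].
Qed.

Lemma exists_ultra_eventually :
  exists U : set_system nat, UltraFilter U /\ \oo `<=` U.
Proof.
have [|U [UU sU _]] := @exists_ultra_cofinite setT; last by exists U.
by move=> N; exists N.
Qed.

Lemma fmap_ultra (T U : Type) (F : set_system T) (f : T -> U) :
  UltraFilter F -> UltraFilter (f @ F).
Proof.
move=> FU; split; first exact: fmap_proper_filter.
move=> G GP sFG; rewrite predeqE => A; split; last exact: sFG.
move=> GA; have [//|FnA] := in_ultra_setVsetC (f @^-1` A) FU.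
have GnA : G (~` A) by apply: sFG.
have : G (A `&` ~` A) by apply: filterI.
by rewrite setICr => /filter_ex [].
Qed.

Lemma ultra_cvg_bounded (T : Type) (U : set_system T) (a : T -> R) (M : R) :
  UltraFilter U -> (forall t, `|a t| <= M) -> exists l : R, a @ U --> l.
Proof.
move=> UU aM.
have aMM : (a @ U) (`[- M, M]%classic : set R).
  suff : U (a @^-1` (`[- M, M]%classic : set R)) by [].
  by apply: filterE => t /=; rewrite in_itv /= -ler_norml.
have := @segment_compact _ (- M) M; rewrite compact_ultra.
by move=> /(_ _ (fmap_ultra a UU) aMM) [l [_ al]]; exists l.
Qed.

Lemma norm_cvg_le (T : Type) (V : normedModType R) (F : set_system T)
    {FF : ProperFilter F} (u : T -> V) (l : V) (M : R) :
  u @ F --> l -> (forall t, `|u t| <= M) -> `|l| <= M.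
Proof. by move=> /cvg_norm ul uM; apply: cvgr_to_le ul _; exact: filterE. Qed.

Lemma cvgr_unique (T : Type) (F : set_system T) {FF : ProperFilter F}
    (a : T -> R) (l l' : R) :
  a @ F --> l -> a @ F --> l' -> l = l'.
Proof. exact: (cvg_unique (@Rhausdorff R) (FF := fmap_proper_filter _ FF)). Qed.

End FilterLimits.

Section WeakLimits.
Context {R : realType} {X : normedModType R}.

Definition weak_lim (T : Type) (F : set_system T) (u : T -> X) (x : X) :=
  forall f, dual f -> (fun t => f (u t)) @ F --> f x.

Variables (T : Type) (F : set_system T) (u : T -> X).
Context {FF : ProperFilter F}.

Lemma weak_lim_norm_le x M :
  weak_lim F u x -> (forall t, `|u t| <= M) -> `|x| <= M.
Proof.
move=> ux uM; have [h [dh <- hle]] := norming_functional x.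
apply: le_trans (ler_norm _) _; apply: norm_cvg_le (ux h dh) _ => t.
exact: le_trans (hle _) (uM t).
Qed.

Lemma weak_lim_cvg_eq x y : weak_lim F u x -> u @ F --> y -> x = y.
Proof.
move=> ux uy; have [g [dg gyx _]] := norming_functional (y - x).
have gy : (fun t => g (u t)) @ F --> g y.
  by apply: continuous_cvg uy; exact: bounded_op_continuous.
have gxy := cvgr_unique (ux g dg) gy.
apply/eqP; rewrite eq_sym -subr_eq0 -normr_eq0 -gyx.
by rewrite (bounded_opB dg) gxy subrr.
Qed.

End WeakLimits.

Lemma weak_lim_comp {R : realType} {X Y : normedModType R} (T : Type)
    (F : set_system T) (u : T -> X) (x : X) (A : X -> Y) :
  bounded_op A -> weak_lim F u x -> weak_lim F (fun t => A (u t)) (A x).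
Proof. by move=> hA ux g dg; exact: (ux _ (dual_comp hA dg)). Qed.

Lemma reflexive_weak_ultralimit {R : realType} {X : normedModType R} (T : Type)
    (U : set_system T) (u : T -> X) (M : R) :
  reflexive_space X -> UltraFilter U -> (forall t, `|u t| <= M) ->
  exists x, weak_lim U u x.
Proof.
move=> Xr UU uM.
have fuM f : dual f -> forall t, `|f (u t)| <= M * opnorm (f : X -> R^o).
  move=> df t; apply: le_trans (ler_opnormM df _) _.
  by rewrite mulrC ler_wpM2r // (opnorm_ge0 df).
pose Phi (f : X -> R) : R := lim ((fun t => f (u t)) @ U).
have Phi_lim f : dual f -> (fun t => f (u t)) @ U --> Phi f.
  move=> df; have [l fl] := ultra_cvg_bounded UU (fuM f df).
  by rewrite /Phi (cvg_lim (@Rhausdorff R) fl).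
have Phi_lin f g (a : R) : dual f -> dual g ->
    Phi (fun x => a * f x + g x) = a * Phi f + Phi g.
  move=> df dg; apply: (cvg_lim (@Rhausdorff R)).
  exact: (cvgD (cvgMl_tmp (a := a) (Phi_lim f df)) (Phi_lim g dg)).
have Phi_bounded f : dual f -> `|Phi f| <= M * opnorm (f : X -> R^o).
  by move=> df; exact: norm_cvg_le (Phi_lim f df) (fuM f df).
have [x Phix] := Xr Phi Phi_lin (ex_intro _ M Phi_bounded).
by exists x => f df; rewrite -Phix //; exact: Phi_lim.
Qed.

Section SequentialBPB.
Context {R : realType} {X Y : normedModType R} (T : X -> Y).

Definition sequential_BPB (eps : R) :=
  forall x : nat -> X, (forall n, `|x n| = 1) ->
    (fun n => `|T (x n)|) @ \oo --> (1 : R) ->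
    exists2 u, `|u| = 1 /\ `|T u| = 1 & exists n, `|u - x n| < eps.

Lemma opnorm_sub_self : opnorm (fun x => T x - T x) = 0.
Proof.
rewrite /opnorm (_ : [set _ | x in _] = [set 0]) ?sup1 //.
apply/seteqP; split => [_ [x _ <-]|_ ->] /=; first by rewrite subrr normr0.
by exists 0; rewrite /= ?normr0 ?subrr ?normr0 ?ler01.
Qed.

Hypotheses (hT : bounded_op T) (nT : opnorm T = 1).

Lemma norm_image_unit_le1 x : `|x| = 1 -> `|T x| <= 1.
Proof. by move=> x1; rewrite -nT -[opnorm T]mulr1 -x1 ler_opnormM. Qed.

Lemma uniform_BPB_approx_of_sequential eps :
  0 < eps -> sequential_BPB eps -> uniform_BPB_approx T T eps.
Proof.
move=> e0 seqT; split => //; split => //; apply: contrapT => nBPB.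
(* Failure for [delta = 1/(n+1)] gives a norming sequence staying [eps] away from
   the norm-attaining unit vectors. *)
have bad n : exists x0, [/\ `|x0| = 1, 1 - n.+1%:R^-1 < `|T x0| &
    forall u, `|u| = 1 -> `|T u| = 1 -> eps <= `|u - x0|].
  apply: contrapT => nx; apply: nBPB; exists n.+1%:R^-1.
  split => [|x0 x01 Tx0]; first by rewrite invr_gt0.
  apply: contrapT => nu; apply: nx; exists x0; split => // u u1 Tu1.
  rewrite leNgt; apply/negP => ue; apply: nu.
  by exists u; rewrite opnorm_sub_self.
have [x Hx] := choice bad.
have x1 n : `|x n| = 1 by case: (Hx n).
have Tx1 : (fun n => `|T (x n)|) @ \oo --> (1 : R).
  apply/cvgrPdist_lt => e e1.
  apply: filterS (near_infty_natSinv_lt (PosNum e1)) => n ne.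
  have [_ Txn _] := Hx n; have Tle := norm_image_unit_le1 (x1 n).
  rewrite ger0_norm ?subr_ge0 //; apply: lt_trans ne.
  by rewrite ltrBlDl -ltrBlDr.
have [u [u1 Tu1] [n un]] := seqT x x1 Tx1.
by have [_ _ /(_ u u1 Tu1)] := Hx n; rewrite leNgt un.
Qed.

Lemma norm_attaining_ultralimit (U : set_system nat) {PU : ProperFilter U}
    (x : nat -> X) (xl : X) :
  \oo `<=` U ->
  (fun n => `|T (x n)|) @ \oo --> (1 : R) -> (fun n => T (x n)) @ U --> T xl ->
  `|xl| <= 1 -> `|xl| = 1 /\ `|T xl| = 1.
Proof.
move=> sU Tx1 TxU xl1.
have Txl1 : `|T xl| = 1.
  have TxU1 : (fun n => `|T (x n)|) @ U --> (1 : R).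
    exact: cvg_trans (cvg_app _ sU) Tx1.
  exact: cvgr_unique (cvg_norm TxU) TxU1.
split => //; apply/le_anti; rewrite xl1 /=.
by rewrite -Txl1 -[`|xl|]mul1r -nT ler_opnormM.
Qed.

End SequentialBPB.

Section LinearSpan.
Context {R : realType} {X : normedModType R} (x : nat -> X).

Definition lin_span : set X :=
  [set v | exists m (c : nat -> R), v = \sum_(i < m) c i *: x i].

Lemma lin_span0 : lin_span 0.
Proof. by exists 0%N, (fun=> 0); rewrite big_ord0. Qed.

Lemma lin_spanD u v : lin_span u -> lin_span v -> lin_span (u + v).
Proof.
move=> [m1 [c1 ->]] [m2 [c2 ->]].
pose c i := (if (i < m1)%N then c1 i else 0) + (if (i < m2)%N then c2 i else 0).
exists (maxn m1 m2), c.
have widen m (d : nat -> R) : (m <= maxn m1 m2)%N ->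
    \sum_(i < m) d i *: x i =
    \sum_(i < maxn m1 m2) (if (i < m)%N then d i else 0) *: x i.
  move=> mM; rewrite (big_ord_widen _ (fun i => d i *: x i) mM) big_mkcond.
  by apply: eq_bigr => i _; case: ifP; rewrite ?scale0r.
rewrite (widen _ c1 (leq_maxl _ _)) (widen _ c2 (leq_maxr _ _)) -big_split.
by apply: eq_bigr => i _; rewrite scalerDl.
Qed.

Lemma lin_spanZ t v : lin_span v -> lin_span (t *: v).
Proof.
move=> [m [c ->]]; exists m, (fun i => t * c i); rewrite scaler_sumr.
by apply: eq_bigr => i _; rewrite scalerA.
Qed.

Lemma lin_span_seq n : lin_span (x n).
Proof.
exists n.+1, (fun i => (i == n)%:R).
rewrite big_ord_recr /= eqxx scale1r big1 ?add0r // => i _.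
by rewrite ltn_eqF ?scale0r.
Qed.

Definition dist_span (v : X) : R := inf [set `|v - s| | s in lin_span].

Lemma dist_span_le v s : lin_span s -> dist_span v <= `|v - s|.
Proof. by move=> Ss; apply: ge_inf; [exists 0 => _ [? _ <-] | exists s]. Qed.

Lemma dist_span_glb v r : (forall s, lin_span s -> r <= `|v - s|) -> r <= dist_span v.
Proof.
move=> vr; apply: lb_le_inf => [|_ [s Ss <-]]; last exact: vr.
by exists `|v - 0|, 0 => //; exact: lin_span0.
Qed.

Lemma dist_span_ge0 v : 0 <= dist_span v.
Proof. by apply: dist_span_glb => s _. Qed.

Lemma dist_span_le_norm v : dist_span v <= `|v|.
Proof. by have := dist_span_le v lin_span0; rewrite subr0. Qed.

Lemma dist_span_mem s : lin_span s -> dist_span s = 0.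
Proof.
move=> Ss; apply/le_anti; rewrite dist_span_ge0 andbT.
by have := dist_span_le s Ss; rewrite subrr normr0.
Qed.

Lemma dist_spanD u v : dist_span (u + v) <= dist_span u + dist_span v.
Proof.
suff : dist_span (u + v) - dist_span u <= dist_span v by lra.
apply: dist_span_glb => s2 S2; suff : dist_span (u + v) - `|v - s2| <= dist_span u by lra.
apply: dist_span_glb => s1 S1; suff : dist_span (u + v) <= `|u - s1| + `|v - s2| by lra.
apply: le_trans (dist_span_le _ (lin_spanD S1 S2)) _.
by rewrite opprD addrACA ler_normD.
Qed.

Lemma dist_spanZ t v : 0 <= t -> dist_span (t *: v) = t * dist_span v.
Proof.
move=> t0; have [->|tn0] := eqVneq t 0.
  by rewrite scale0r mul0r dist_span_mem //; exact: lin_span0.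
have tp : 0 < t by rewrite lt_def tn0 t0.
apply/le_anti/andP; split.
- rewrite mulrC -ler_pdivrMr //; apply: dist_span_glb => s Ss.
  rewrite ler_pdivrMr // mulrC.
  have := dist_span_le (t *: v) (lin_spanZ t Ss).
  by rewrite -scalerBr normrZ gtr0_norm.
- apply: dist_span_glb => s Ss.
  have := dist_span_le v (lin_spanZ t^-1 Ss).
  rewrite -(ler_pM2l tp) => /le_trans; apply.
  by rewrite -{1}(gtr0_norm tp) -normrZ scalerBr scalerA mulfV ?gt_eqF ?scale1r.
Qed.

Lemma dist_spanN v : dist_span (- v) = dist_span v.
Proof.
have le w : dist_span (- w) <= dist_span w.
  apply: dist_span_glb => s Ss; have := dist_span_le (- w) (lin_spanZ (-1) Ss).
  by rewrite scaleN1r -opprD normrN.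
by apply/le_anti; rewrite le /=; have := le (- v); rewrite opprK.
Qed.

Lemma dist_spanB_eq0 u v : dist_span u = 0 -> dist_span v = 0 -> dist_span (u - v) = 0.
Proof.
move=> du dv; apply/le_anti; rewrite dist_span_ge0 andbT.
by apply: le_trans (dist_spanD _ _) _; rewrite dist_spanN du dv addr0.
Qed.

(* Rational combinations of the [x i], enumerated through [unpickle]: a countable
   dense subset of the span. *)
Definition span_rat (k : nat) : X :=
  if (unpickle k : option (seq rat)) is Some s then
    \sum_(i < size s) (ratr s`_i : R) *: x i
  else 0.

Lemma span_rat_dense s e : lin_span s -> 0 < e -> exists k, `|s - span_rat k| < e.
Proof.
move=> [m [c ->]] e0.
have xp i : 0 < `|x i| + 1 by rewrite ltr_wpDl.
pose d i := e / m.+1%:R / (`|x i| + 1).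
have approx i : exists q : rat, `|c i - ratr q| < d i.
  have d0 : 0 < d i by rewrite !divr_gt0.
  have [|q] := @rat_in_itvoo R (c i - d i) (c i + d i); first lra.
  by rewrite in_itv /= => /andP [? ?]; exists q; rewrite ltr_norml; apply/andP; split; lra.
have [q cq] := choice approx.
exists (pickle (mkseq q m)); rewrite /span_rat pickleK size_mkseq -sumrB.
under eq_bigr => i _ do rewrite nth_mkseq // -scalerBl.
apply: le_lt_trans (ler_norm_sum _ _ _) _.
apply: (@le_lt_trans _ _ (\sum_(i < m) e / m.+1%:R)).
  apply: ler_sum => i _; rewrite normrZ.
  apply: le_trans (_ : _ <= `|c i - ratr (q i)| * (`|x i| + 1)) _.
    by rewrite ler_wpM2l // lerDl.
  by have := cq i; rewrite ltr_pdivlMr // => /ltW.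
rewrite sumr_const card_ord -[_ *+ m]mulr_natr -mulrA gtr_pMr // mulrC.
by rewrite ltr_pdivrMr ?ltr0Sn // mul1r ltr_nat.
Qed.

Lemma norming_span_rat_separates (G : nat -> X -> R) :
  (forall k, [/\ dual (G k), G k (span_rat k) = `|span_rat k| &
                 forall v, `|G k v| <= `|v|]) ->
  forall w, dist_span w = 0 -> (forall k, G k w = 0) -> w = 0.
Proof.
move=> HG w dw Gw; apply/normr0_eq0/le_anti; rewrite normr_ge0 andbT.
rewrite leNgt; apply/negP => w0.
pose e := `|w| / 4.
have e0 : 0 < e by rewrite divr_gt0.
have we : `|w| = 4 * e by rewrite /e mulrC divfK.
have [_ [s Ss <-] ws] : exists2 r, [set `|w - s| | s in lin_span] r & r < e.
  apply: inf_lt; last by rewrite -/(dist_span w) dw.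
  by exists `|w - 0|, 0 => //; exact: lin_span0.
have [k sk] := span_rat_dense Ss e0.
have [dG GD Gle] := HG k.
have wk : `|w - span_rat k| < 2 * e.
  by have := ler_normD (w - s) (s - span_rat k); rewrite addrA subrK; lra.
have Dk : `|span_rat k| < 2 * e.
  rewrite -GD -[span_rat k](subrK w) (bounded_opD dG) Gw addr0.
  by apply: le_lt_trans (ler_norm _) _; apply: le_lt_trans (Gle _) _; rewrite distrC.
by have := ler_normD (w - span_rat k) (span_rat k); rewrite subrK; lra.
Qed.

Lemma weak_lim_dist_span (T : Type) (F : set_system T) {FF : ProperFilter F}
    (u : T -> X) (v : X) :
  (forall t, lin_span (u t)) -> weak_lim F u v -> dist_span v = 0.
Proof.
move=> uS uv.
have [h [hD hZ hle hv]] := hahn_banach (@dist_spanD) (@dist_spanZ) v.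
have hle1 w : h w <= 1 * `|w|.
  by rewrite mul1r; exact: le_trans (hle w) (dist_span_le_norm w).
have dh := dual_of_dominated ltr01 hD hZ hle1.
have h0 s : lin_span s -> h s = 0.
  move=> Ss; apply/le_anti; rewrite -{1}(dist_span_mem Ss) hle /=.
  have := hle (- s); rewrite dist_spanN (dist_span_mem Ss) -scaleN1r hZ.
  by rewrite mulN1r oppr_le0.
have hu0 : (fun t => h (u t)) @ F --> (0 : R).
  rewrite (_ : (fun t => h (u t)) = fun=> 0); first exact: cvg_cst.
  by apply/funext => t; exact: h0.
by rewrite -hv (cvgr_unique (uv h dh) hu0).
Qed.

End LinearSpan.

Lemma cvg_diagonal_subseq {R : realType} (U : set_system nat) {PU : ProperFilter U}
    (a : nat -> nat -> R) (l : nat -> R) :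
  (forall k, a k @ U --> l k) ->
  exists ns : nat -> nat, forall k, (fun j => a k (ns j)) @ \oo --> l k.
Proof.
move=> al.
have stage j : exists n, forall k, (k <= j)%N -> `|l k - a k n| < j.+1%:R^-1.
  have : \forall n \near U, forall i : 'I_j.+1, `|l i - a i n| < j.+1%:R^-1.
    by apply: filter_forall => i; move: (al i) => /cvgrPdist_lt; apply.
  by move=> /filter_ex [n Hn]; exists n => k kj; exact: (Hn (Ordinal (kj : k < j.+1)%N)).
have [ns Hns] := choice stage.
exists ns => k; apply/cvgrPdist_lt => e e0.
apply: filterS (filterI (nbhs_infty_ge k) (near_infty_natSinv_lt (PosNum e0))).
by move=> j [kj je]; exact: lt_trans (Hns j k kj) je.
Qed.

Lemma not_cvg_frequently {R : realType} (a : nat -> R) (l : R) :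
  ~ a @ \oo --> l ->
  exists2 e, 0 < e & forall N, exists2 j, (N <= j)%N & e <= `|l - a j|.
Proof.
move=> nal; apply: contrapT => nfreq; apply: nal; apply/cvgrPdist_lt => e e0.
apply: contrapT => nev; apply: nfreq; exists e => // N; apply: contrapT => nj.
apply: nev; exists N => // j /= Nj.
by rewrite ltNge; apply/negP => lej; apply: nj; exists j.
Qed.

Lemma weak_cvg_subseq_of_ultralimit {R : realType} {X : normedModType R}
    (x : nat -> X) (M : R) (U : set_system nat) {PU : ProperFilter U} (v : X) :
  reflexive_space X -> (forall n, `|x n| <= M) -> weak_lim U x v ->
  exists ns : nat -> nat, weak_cvg (fun j => x (ns j)) v.
Proof.
move=> Xr xM xv.
(* Diagonalise against norming functionals of a countable dense subset of the
   span; another weak cluster point of the subsequence agrees with [v] on them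
   and lies in the closed span, hence equals [v]. *)
have [G HG] := choice (fun k => norming_functional (span_rat x k)).
have [ns Gns] : exists ns, forall k, (fun j => G k (x (ns j))) @ \oo --> G k v.
  apply: (@cvg_diagonal_subseq R U PU (fun k n => G k (x n))) => k.
  by apply: xv; case: (HG k).
exists ns => f df; apply: contrapT => /not_cvg_frequently [e e0 freq].
have [U' [UU' sU' U'e]] := exists_ultra_cofinite freq.
have [x' x'w] := reflexive_weak_ultralimit Xr UU' (fun j => xM (ns j)).
have vx' : v = x'.
  apply/eqP; rewrite -subr_eq0; apply/eqP; apply: (norming_span_rat_separates HG).
    apply: dist_spanB_eq0; first exact: weak_lim_dist_span (lin_span_seq x) xv.
    exact: weak_lim_dist_span (fun j => lin_span_seq x (ns j)) x'w.
  move=> k; have [dG _ _] := HG k.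
  rewrite (bounded_opB dG); apply/eqP; rewrite subr_eq0; apply/eqP.
  have GnsU' := cvg_trans (cvg_app (fun j => G k (x (ns j))) sU') (Gns k).
  exact: cvgr_unique GnsU' (x'w _ dG).
have fU' : (fun j => `|f v - f (x (ns j))|) @ U' --> (0 : R).
  have -> : (0 : R) = `|f v - f x'| by rewrite vx' subrr normr0.
  by apply: cvg_norm; apply: cvgB; [exact: cvg_cst | exact: x'w].
have : e <= 0 by apply: cvgr_to_ge fU' _; exact: U'e.
by rewrite leNgt e0.
Qed.

Lemma compact_op_ultralimit {R : realType} {X Y : normedModType R} (T : X -> Y)
    (I : Type) (U : set_system I) (u : I -> X) :
  compact_op T -> UltraFilter U -> (forall i, `|u i| <= 1) ->
  exists y : Y, (fun i => T (u i)) @ U --> y.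
Proof.
move=> [_ Tc] UU u1.
have TuK : ((fun i => T (u i)) @ U) (closure (T @` [set v : X | `|v| <= 1])).
  suff : U ((fun i => T (u i)) @^-1` closure (T @` [set v : X | `|v| <= 1])) by [].
  by apply: filterE => i /=; apply: subset_closure; exists (u i); first exact: u1.
move: Tc; rewrite compact_ultra.
by move=> /(_ _ (fmap_ultra (fun i => T (u i)) UU) TuK) [y [_ Tuy]]; exists y.
Qed.

Lemma compact_op_sequential_BPB {R : realType} {X Y : normedModType R}
    (T : X -> Y) (eps : R) :
  reflexive_space X -> kadets_klee X -> compact_op T -> opnorm T = 1 ->
  0 < eps -> sequential_BPB T eps.
Proof.
move=> Xr Xkk Tc nT e0 x x1 Tx1.
have x1' n : `|x n| <= 1 by rewrite x1.
have [U [UU sU]] := exists_ultra_eventually.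
have [xw xwU] := reflexive_weak_ultralimit Xr UU x1'.
have [y TxU] := compact_op_ultralimit Tc UU x1'.
have Txw := weak_lim_cvg_eq (weak_lim_comp Tc.1 xwU) TxU; rewrite -{}Txw in TxU.
have [xw1 Txw1] := norm_attaining_ultralimit Tc.1 nT sU Tx1 TxU (weak_lim_norm_le xwU x1').
have [ns xnsw] := weak_cvg_subseq_of_ultralimit Xr x1' xwU.
have xns1 : (fun j => `|x (ns j)|) @ \oo --> `|xw|.
  by under eq_fun do rewrite x1; rewrite xw1; exact: cvg_cst.
move: (Xkk _ _ xnsw xns1) => /cvgrPdist_lt /(_ _ e0) /filter_ex [j].
rewrite sub0r normrN normr_id distrC => xwj.
by exists xw => //; exists (ns j).
Qed.

Lemma cvg_sum_ord {K : numFieldType} {V : normedModType K} (T : Type)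
    (F : set_system T) {FF : Filter F} n (f : 'I_n -> T -> V) (a : 'I_n -> V) :
  (forall i, f i @ F --> a i) ->
  (fun t => \sum_(i < n) f i t) @ F --> \sum_(i < n) a i.
Proof. by move=> fa; apply: cvg_big => //; exact: add_continuous. Qed.

Section FiniteDimension.
Context {R : realType} {X : normedModType R}.

Lemma normr_le_sum_norm n (c : 'I_n -> R) i : `|c i| <= \sum_(j < n) `|c j|.
Proof. by rewrite (bigD1 i) //= lerDl sumr_ge0. Qed.

Lemma independent_norm_lb n (v : 'I_n -> X) :
  (forall c : 'I_n -> R, \sum_(i < n) c i *: v i = 0 -> forall i, c i = 0) ->
  exists2 m, 0 < m & forall c : 'I_n -> R,
    \sum_(i < n) `|c i| = 1 -> m <= `|\sum_(i < n) c i *: v i|.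
Proof.
move=> indep; apply: contrapT => nlb.
(* Otherwise an ultralimit of normalised coefficients with vanishing
   combinations is a nontrivial linear dependence. *)
have small k : exists c : 'I_n -> R,
    \sum_(i < n) `|c i| = 1 /\ `|\sum_(i < n) c i *: v i| < k.+1%:R^-1.
  apply: contrapT => nc; apply: nlb; exists k.+1%:R^-1; first by rewrite invr_gt0.
  by move=> c c1; rewrite leNgt; apply/negP => ck; apply: nc; exists c.
have [c Hc] := choice small.
have [U [UU sU]] := exists_ultra_eventually.
have PU : ProperFilter U := @ultra_proper _ _ UU.
have cU i : exists l : R, (fun k => c k i) @ U --> l.
  apply: (ultra_cvg_bounded (M := 1) UU) => k.
  by have [<- _] := Hc k; exact: normr_le_sum_norm.
have [l cl] := choice cU.
have l1 : \sum_(i < n) `|l i| = 1.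
  have sum1 : (fun k => \sum_(i < n) `|c k i|) @ U --> \sum_(i < n) `|l i|.
    exact: cvg_sum_ord (fun i => cvg_norm (cl i)).
  rewrite (_ : (fun k => _) = fun=> 1) in sum1; last by apply/funext => k; case: (Hc k).
  by rewrite (cvgr_unique sum1 (cvg_cst (1 : R))).
have l0 : \sum_(i < n) l i *: v i = 0.
  have cvl : (fun k => \sum_(i < n) c k i *: v i) @ U --> \sum_(i < n) l i *: v i.
    exact: cvg_sum_ord (fun i => cvgZ (cl i) (cvg_cst (v i))).
  have cv0 : (fun k => `|\sum_(i < n) c k i *: v i|) @ U --> (0 : R).
    apply: cvg_trans (cvg_app _ sU) _; apply/cvgrPdist_lt => e e0.
    apply: filterS (near_infty_natSinv_lt (PosNum e0)) => k ke.
    by rewrite sub0r normrN normr_id; exact: lt_trans (Hc k).2 ke.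
  by apply/normr0_eq0; exact: cvgr_unique (cvg_norm cvl) cv0.
have : \sum_(i < n) `|l i| = 0.
  by apply: big1 => i _; rewrite (indep _ l0 i) normr0.
by rewrite l1 => /eqP; rewrite oner_eq0.
Qed.

Lemma independent_coord_bound n (v : 'I_n -> X) :
  (forall c : 'I_n -> R, \sum_(i < n) c i *: v i = 0 -> forall i, c i = 0) ->
  exists2 C, 0 <= C & forall (c : 'I_n -> R) i,
    `|c i| <= C * `|\sum_(j < n) c j *: v j|.
Proof.
move=> indep; have [m m0 mle] := independent_norm_lb indep.
exists m^-1 => [|c i]; first by rewrite invr_ge0 ltW.
pose S := \sum_(j < n) `|c j|.
have ciS : `|c i| <= S := normr_le_sum_norm c i.
have [S0|Sn0] := eqVneq S 0.
  by apply: le_trans ciS _; rewrite S0 mulr_ge0 // invr_ge0 ltW.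
have Sp : 0 < S by rewrite lt_def Sn0 sumr_ge0.
have := mle (fun j => S^-1 * c j).
have -> : \sum_(j < n) (S^-1 * c j) *: v j = S^-1 *: \sum_(j < n) c j *: v j.
  by rewrite scaler_sumr; apply: eq_bigr => j _; rewrite scalerA.
have -> : \sum_(j < n) `|S^-1 * c j| = 1.
  rewrite -(mulVf Sn0) /S mulr_sumr; apply: eq_bigr => j _.
  by rewrite normrM ger0_norm // invr_ge0 ltW.
rewrite normrZ ger0_norm ?invr_ge0 ?(ltW Sp) // => /(_ erefl) mSle.
apply: le_trans ciS _; rewrite -(ler_pM2l m0) mulrA mulfV ?gt_eqF // mul1r.
by have := ler_wpM2l (ltW Sp) mSle; rewrite mulrA mulfV ?gt_eqF // mul1r mulrC.
Qed.

Lemma span_drop_dependent n (v : 'I_n.+1 -> X) (d : 'I_n.+1 -> R) (i0 : 'I_n.+1) :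
  \sum_(i < n.+1) d i *: v i = 0 -> d i0 != 0 ->
  forall c : 'I_n.+1 -> R, exists e : 'I_n -> R,
    \sum_(j < n) e j *: v (lift i0 j) = \sum_(i < n.+1) c i *: v i.
Proof.
move=> dv0 di0 c; exists (fun j => c (lift i0 j) - c i0 / d i0 * d (lift i0 j)).
move: dv0; rewrite !(bigD1_ord i0) //=.
set A := \sum_(j < n) c (lift i0 j) *: v (lift i0 j).
set B := \sum_(j < n) d (lift i0 j) *: v (lift i0 j) => dv0.
have -> : \sum_(j < n) (c (lift i0 j) - c i0 / d i0 * d (lift i0 j)) *: v (lift i0 j)
    = A - (c i0 / d i0) *: B.
  rewrite /A /B scaler_sumr -sumrB; apply: eq_bigr => j _.
  by rewrite scalerBl scalerA.
have -> : B = - (d i0 *: v i0) by apply/eqP; rewrite -addr_eq0 addrC dv0.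
by rewrite scalerN opprK scalerA divfK // addrC.
Qed.

Lemma span_coord_bound n (v : 'I_n -> X) : exists2 C, 0 <= C &
  forall c : 'I_n -> R, exists c' : 'I_n -> R,
    \sum_(i < n) c' i *: v i = \sum_(i < n) c i *: v i /\
    forall i, `|c' i| <= C * `|\sum_(i < n) c i *: v i|.
Proof.
elim: n v => [|n IH] v; first by exists 0 => // c; exists c; split => // [[]].
have [indep|dep] := pselect (forall c : 'I_n.+1 -> R,
    \sum_(i < n.+1) c i *: v i = 0 -> forall i, c i = 0).
  by have [C C0 Cc] := independent_coord_bound indep; exists C => // c; exists c.
move/existsNP: dep => [d /not_implyP [dv0 /existsNP [i0 /eqP di0]]].
have [C C0 HC] := IH (fun j => v (lift i0 j)).
exists C => // c; have [e ec] := span_drop_dependent dv0 di0 c.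
have [e' [e'e e'C]] := HC e.
exists (fun i => if unlift i0 i is Some j then e' j else 0); split.
  rewrite (bigD1_ord i0) //= unlift_none scale0r add0r.
  under eq_bigr => j _ do rewrite liftK.
  by rewrite e'e ec.
move=> i; case: (unlift i0 i) => [j|]; first by rewrite -ec; exact: e'C.
by rewrite normr0 mulr_ge0.
Qed.

Lemma finite_dim_ultralimit (I : Type) (U : set_system I) (u : I -> X) (M : R) :
  finite_dim X -> UltraFilter U -> (forall i, `|u i| <= M) ->
  exists x : X, u @ U --> x.
Proof.
move=> [n [v spanv]] UU uM.
have [C C0 HC] := span_coord_bound v.
have coord t : exists c : 'I_n -> R,
    u t = \sum_(i < n) c i *: v i /\ forall i, `|c i| <= C * M.
  have [c0 e0] := spanv (u t); have [c [e ce]] := HC c0.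
  exists c; split; first by rewrite e.
  by move=> i; apply: le_trans (ce i) _; rewrite -e0 ler_wpM2l.
have [c Hc] := choice coord.
have cU i : exists l : R, (fun t => c t i) @ U --> l.
  by apply: (ultra_cvg_bounded (M := C * M) UU) => t; case: (Hc t).
have [l cl] := choice cU.
exists (\sum_(i < n) l i *: v i).
rewrite (_ : u = fun t => \sum_(i < n) c t i *: v i); last first.
  by apply/funext => t; case: (Hc t).
exact: cvg_sum_ord (fun i => cvgZ (cl i) (cvg_cst (v i))).
Qed.

Lemma finite_dim_sequential_BPB {Y : normedModType R} (T : X -> Y) (eps : R) :
  finite_dim X -> bounded_op T -> opnorm T = 1 -> 0 < eps -> sequential_BPB T eps.
Proof.
move=> fX hT nT e0 x x1 Tx1.
have x1' n : `|x n| <= 1 by rewrite x1.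
have [U [UU sU]] := exists_ultra_eventually.
have [xl xU] := finite_dim_ultralimit fX UU x1'.
have TxU : (fun n => T (x n)) @ U --> T xl.
  by apply: continuous_cvg xU; exact: bounded_op_continuous.
have [xl1 Txl1] := norm_attaining_ultralimit hT nT sU Tx1 TxU (norm_cvg_le xU x1').
move: xU => /cvgrPdist_lt /(_ _ e0) /filter_ex [n xn].
by exists xl => //; exists n.
Qed.

End FiniteDimension.

Theorem theorem2p5 (R : realType) :
  (forall (X Y : completeNormedModType R),
      reflexive_space X -> kadets_klee X -> dim_gt1 X -> dim_gt1 Y ->
      forall (T : X -> Y), compact_op T -> opnorm T = 1 ->
      forall eps : R, 0 < eps -> uniform_BPB_approx T T eps) /\
  (forall (X Y : completeNormedModType R),
      finite_dim X -> finite_dim Y -> dim_gt1 X -> dim_gt1 Y ->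
      forall (T : X -> Y), bounded_op T -> opnorm T = 1 ->
      forall eps : R, 0 < eps -> exists A : X -> Y, uniform_BPB_approx T A eps).
Proof.
split.
- move=> X Y Xr Xkk _ _ T Tc nT eps e0.
  apply: (uniform_BPB_approx_of_sequential Tc.1 nT e0).
  exact: compact_op_sequential_BPB.
- move=> X Y fX _ _ _ T hT nT eps e0; exists T.
  apply: (uniform_BPB_approx_of_sequential hT nT e0).
  exact: finite_dim_sequential_BPB.
Qed.
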